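(* Deciding whether a normal finitely recursive program $P$ is inconsistent is r.e.-hard.
   Context: A normal program is a finite set of rules $A\leftarrow L_1,\dots,L_n$ ($n\ge 0$), $A$ an atom, $L_i$ atoms or negated atoms $\mathtt{not}\,B$, over a first-order language possibly with function symbols. $\mathsf{Ground}(P)$ is its ground instantiation. For a set $M$ of ground atoms, $P^M$ is obtained from $\mathsf{Ground}(P)$ by deleting rules having some $\mathtt{not}\,B$ in the body with $B\in M$ and deleting negative literals from the remaining rules; $M$ is a stable model iff $M$ is the least Herbrand model of $P^M$. $P$ is inconsistent iff it has no stable model. The dependency graph has ground atoms as vertices and an edge $A\to B$ whenever some $r\in\mathsf{Ground}(P)$ has head $A$ and $B$ occurring in its body (positively or negated); $A$ depends on $B$ if there is a directed path from $A$ to $B$ (every atom depends on itself). $P$ is finitely recursive iff each ground atom depends on finitely many ground atoms. r.e.-hard means every recursively enumerable set is many-one reducible to the set of inconsistent normal finitely recursive programs. *)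

From Stdlib Require Import List Arith Relations.
Import ListNotations.

(* A function symbol is identified by its name together with its arity. *)
Inductive term : Type :=
| Var : nat -> term
| Fn : nat -> list term -> term.

Record atom : Type := mkAtom { pred_sym : nat; atom_args : list term }.

Inductive literal : Type :=
| Pos : atom -> literal
| Neg : atom -> literal.

Record rule : Type := mkRule { head : atom; body : list literal }.

Definition program : Type := list rule.

Definition lit_atom (l : literal) : atom :=
  match l with Pos a => a | Neg a => a end.

Inductive occurs_fn (f n : nat) : term -> Prop :=
| occ_root : forall ts, length ts = n -> occurs_fn f n (Fn f ts)
| occ_sub : forall g ts t, In t ts -> occurs_fn f n t -> occurs_fn f n (Fn g ts).

Definition atom_of_rule (r : rule) (a : atom) : Prop :=
  a = head r \/ exists l, In l (body r) /\ a = lit_atom l.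

Definition fsym_of (P : program) (f n : nat) : Prop :=
  exists r a t, In r P /\ atom_of_rule r a /\ In t (atom_args a) /\ occurs_fn f n t.

Definition hsym (P : program) (f n : nat) : Prop :=
  fsym_of P f n \/ (f = 0 /\ n = 0 /\ ~ (exists c, fsym_of P c 0)).

Inductive herbrand (P : program) : term -> Prop :=
| hu_fn : forall f ts, hsym P f (length ts) ->
    (forall t, In t ts -> herbrand P t) -> herbrand P (Fn f ts).

Definition ground_atom (P : program) (a : atom) : Prop :=
  forall t, In t (atom_args a) -> herbrand P t.

Fixpoint subst (s : nat -> term) (t : term) : term :=
  match t with
  | Var x => s x
  | Fn f ts => Fn f (map (subst s) ts)
  end.

Definition subst_atom (s : nat -> term) (a : atom) : atom :=
  mkAtom (pred_sym a) (map (subst s) (atom_args a)).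

Definition subst_lit (s : nat -> term) (l : literal) : literal :=
  match l with
  | Pos a => Pos (subst_atom s a)
  | Neg a => Neg (subst_atom s a)
  end.

Definition subst_rule (s : nat -> term) (r : rule) : rule :=
  mkRule (subst_atom s (head r)) (map (subst_lit s) (body r)).

Definition ground_rule (P : program) (r' : rule) : Prop :=
  exists r s, In r P /\ (forall x, herbrand P (s x)) /\ r' = subst_rule s r.

(* S is a model (closed set) of the reduct P^M *)
Definition closed_reduct (P : program) (M S : atom -> Prop) : Prop :=
  forall r, ground_rule P r ->
    (forall a, In (Neg a) (body r) -> ~ M a) ->
    (forall a, In (Pos a) (body r) -> S a) ->
    S (head r).

Definition least_model_reduct (P : program) (M : atom -> Prop) (a : atom) : Prop :=
  forall S, closed_reduct P M S -> S a.

Definition stable_model (P : program) (M : atom -> Prop) : Prop :=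
  forall a, M a <-> least_model_reduct P M a.

Definition inconsistent (P : program) : Prop :=
  ~ exists M, stable_model P M.

Definition dep_edge (P : program) (A B : atom) : Prop :=
  exists r, ground_rule P r /\ head r = A /\ (In (Pos B) (body r) \/ In (Neg B) (body r)).

Definition depends (P : program) : atom -> atom -> Prop :=
  clos_refl_trans atom (dep_edge P).

Definition finitely_recursive (P : program) : Prop :=
  forall A, ground_atom P A -> exists l : list atom, forall B, depends P A B -> In B l.

Inductive recf : Type :=
| RZero : recf
| RSucc : recf
| RProj : nat -> recf
| RComp : recf -> list recf -> recf
| RPrec : recf -> recf -> recf
| RMu : recf -> recf.

Inductive eval : recf -> list nat -> nat -> Prop :=
| ev_zero : forall v, eval RZero v 0
| ev_succ : forall v, eval RSucc v (S (nth 0 v 0))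
| ev_proj : forall i v, eval (RProj i) v (nth i v 0)
| ev_comp : forall f gs v ys z,
    Forall2 (fun g y => eval g v y) gs ys -> eval f ys z -> eval (RComp f gs) v z
| ev_prec0 : forall f g v z, eval f v z -> eval (RPrec f g) (0 :: v) z
| ev_precS : forall f g n v y z,
    eval (RPrec f g) (n :: v) y -> eval g (n :: y :: v) z ->
    eval (RPrec f g) (S n :: v) z
| ev_mu : forall f v n,
    eval f (n :: v) 0 ->
    (forall m, m < n -> exists k, eval f (m :: v) (S k)) ->
    eval (RMu f) v n.

Definition re_set (A : nat -> Prop) : Prop :=
  exists f : recf, forall n, A n <-> exists y, eval f [n] y.

Definition computable (h : nat -> nat) : Prop :=
  exists f : recf, forall n, eval f [n] (h n).

Definition cpair (a b : nat) : nat := (a + b) * (a + b + 1) / 2 + b.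

Fixpoint enc_list (l : list nat) : nat :=
  match l with
  | [] => 0
  | x :: l' => S (cpair x (enc_list l'))
  end.

Fixpoint enc_term (t : term) : nat :=
  match t with
  | Var x => cpair 0 x
  | Fn f ts => cpair 1 (cpair f (enc_list (map enc_term ts)))
  end.

Definition enc_atom (a : atom) : nat :=
  cpair (pred_sym a) (enc_list (map enc_term (atom_args a))).

Definition enc_lit (l : literal) : nat :=
  match l with
  | Pos a => cpair 0 (enc_atom a)
  | Neg a => cpair 1 (enc_atom a)
  end.

Definition enc_rule (r : rule) : nat :=
  cpair (enc_atom (head r)) (enc_list (map enc_lit (body r))).

Definition enc_program (P : program) : nat := enc_list (map enc_rule P).

Definition many_one_reducible (A : nat -> Prop) (B : program -> Prop) : Prop :=
  exists f : nat -> program,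
    computable (fun n => enc_program (f n)) /\ forall n, A n <-> B (f n).

Definition inconsistent_fr (P : program) : Prop :=
  finitely_recursive P /\ inconsistent P.

Definition re_hard (B : program -> Prop) : Prop :=
  forall A : nat -> Prop, re_set A -> many_one_reducible A B.

(* The reduction sends n to a program consisting of a Horn interpreter for partial
   recursive functions and one rule  p0(T) <- not p0(T), p1(T),  where p1(T) says that
   T is a derivation of a value of the given function on input n.  If the computation
   converges, some ground p1(T) is derivable and this odd loop leaves no stable model;
   otherwise the rule never fires and the least model of the Horn rules is stable.
   Interpreter atoms carry the whole derivation tree of their computation, so every
   body atom is built from subterms of its head: the program is finitely recursive
   although it simulates unbounded computations. *)

From Stdlib Require Import List Arith Lia Relations Classical.
Import ListNotations.

Lemma eval_comp1 f g v a z : eval g v a -> eval f [a] z -> eval (RComp f [g]) v z.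
Proof. intros Hg Hf. eapply ev_comp; eauto. Qed.

Lemma eval_comp2 f g1 g2 v a b z :
  eval g1 v a -> eval g2 v b -> eval f [a; b] z -> eval (RComp f [g1; g2]) v z.
Proof. intros H1 H2 Hf. eapply ev_comp; eauto. Qed.

Fixpoint rconst (c : nat) : recf :=
  match c with 0 => RZero | S c => RComp RSucc [rconst c] end.

Lemma eval_rconst c v : eval (rconst c) v c.
Proof.
  induction c as [|c IHc]; [constructor|].
  eapply eval_comp1; [exact IHc | exact (ev_succ [c])].
Qed.

Definition radd : recf := RPrec (RProj 0) (RComp RSucc [RProj 1]).

Lemma eval_radd x y : eval radd [x; y] (x + y).
Proof.
  induction x as [|x IHx]; [constructor; exact (ev_proj 0 [y])|].
  eapply ev_precS; [exact IHx|].
  eapply eval_comp1; [exact (ev_proj 1 [x; x + y; y]) | exact (ev_succ [x + y])].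
Qed.

Fixpoint triangular (k : nat) : nat :=
  match k with 0 => 0 | S k' => S k' + triangular k' end.

Lemma triangular_half k : k * (k + 1) / 2 = triangular k.
Proof.
  assert (Hdouble : k * (k + 1) = triangular k * 2)
    by (induction k; simpl; [reflexivity | nia]).
  rewrite Hdouble. apply Nat.div_mul. lia.
Qed.

Definition rtriangular : recf := RPrec RZero (RComp radd [RComp RSucc [RProj 0]; RProj 1]).

Lemma eval_rtriangular k : eval rtriangular [k] (triangular k).
Proof.
  induction k as [|k IHk]; [constructor; constructor|].
  eapply ev_precS; [exact IHk|].
  eapply eval_comp2; [| exact (ev_proj 1 [k; triangular k]) | apply eval_radd].
  eapply eval_comp1; [exact (ev_proj 0 [k; triangular k]) | exact (ev_succ [k])].
Qed.

Definition rcpair : recf := RComp radd [RComp rtriangular [RComp radd [RProj 0; RProj 1]]; RProj 1].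

Lemma eval_rcpair a b : eval rcpair [a; b] (cpair a b).
Proof.
  unfold cpair. rewrite triangular_half.
  eapply eval_comp2; [| exact (ev_proj 1 [a; b]) | apply eval_radd].
  eapply eval_comp1; [| apply eval_rtriangular].
  eapply eval_comp2; [exact (ev_proj 0 [a; b]) | exact (ev_proj 1 [a; b]) | apply eval_radd].
Qed.

(* Expressions in one variable built from constants, successor and [cpair]:
   the code of a term is such an expression in the codes of its subterms. *)
Inductive pexpr : Type :=
| PVar
| PConst (c : nat)
| PPair (a b : pexpr)
| PSucc (a : pexpr).

Fixpoint pexpr_val (x : pexpr) (e : nat) : nat :=
  match x with
  | PVar => e
  | PConst c => c
  | PPair a b => cpair (pexpr_val a e) (pexpr_val b e)
  | PSucc a => S (pexpr_val a e)
  end.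

Fixpoint pexpr_recf (x : pexpr) (X : recf) : recf :=
  match x with
  | PVar => X
  | PConst c => rconst c
  | PPair a b => RComp rcpair [pexpr_recf a X; pexpr_recf b X]
  | PSucc a => RComp RSucc [pexpr_recf a X]
  end.

Lemma eval_pexpr_recf x X v e : eval X v e -> eval (pexpr_recf x X) v (pexpr_val x e).
Proof.
  intros HX. induction x; simpl.
  - exact HX.
  - apply eval_rconst.
  - eapply eval_comp2; eauto. apply eval_rcpair.
  - eapply eval_comp1; eauto. exact (ev_succ [pexpr_val x e]).
Qed.

Lemma eval_iterate (step : pexpr) (F : nat -> nat) :
  (forall k, F (S k) = pexpr_val step (F k)) ->
  forall n, eval (RPrec (rconst (F 0)) (pexpr_recf step (RProj 1))) [n] (F n).
Proof.
  intros HS n. induction n as [|n IHn].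
  - constructor. apply eval_rconst.
  - rewrite HS. eapply ev_precS; [exact IHn|].
    apply eval_pexpr_recf. exact (ev_proj 1 [n; F n]).
Qed.

Fixpoint term_nested_ind (P : term -> Prop) (HV : forall x, P (Var x))
  (HF : forall f ts, (forall t, In t ts -> P t) -> P (Fn f ts)) (t : term) : P t :=
  match t with
  | Var x => HV x
  | Fn f ts => HF f ts ((fix go (ts : list term) : forall t, In t ts -> P t :=
      match ts with
      | [] => fun t H => False_ind _ H
      | u :: us => fun t H => match H with
                    | or_introl e => eq_ind u P (term_nested_ind P HV HF u) t e
                    | or_intror H' => go us t H'
                    end
      end) ts)
  end.

Fixpoint subterms (t : term) : list term :=
  match t with Var x => [Var x] | Fn f ts => Fn f ts :: flat_map subterms ts end.

Lemma subterms_refl t : In t (subterms t).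
Proof. destruct t; simpl; auto. Qed.

Lemma subterms_trans u t w : In t (subterms u) -> In w (subterms t) -> In w (subterms u).
Proof.
  revert t w. induction u as [x|f ts IH] using term_nested_ind; intros t w Ht Hw.
  - destruct Ht as [<-|[]]. exact Hw.
  - destruct Ht as [<-|Ht]; [exact Hw|].
    apply in_flat_map in Ht as [u [Hu Ht]].
    right. apply in_flat_map. eauto.
Qed.

Lemma subterms_subst s u t : In t (subterms u) -> In (subst s t) (subterms (subst s u)).
Proof.
  revert t. induction u as [x|f ts IH] using term_nested_ind; intros t Ht.
  - destruct Ht as [<-|[]]. apply subterms_refl.
  - destruct Ht as [<-|Ht]; [apply subterms_refl|].
    apply in_flat_map in Ht as [u [Hu Ht]].
    right. apply in_flat_map. exists (subst s u). split; [apply in_map|]; auto.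
Qed.

Definition atom_subterms (a : atom) : list term := flat_map subterms (atom_args a).

Definition atom_below (k : nat) (A B : atom) : Prop :=
  pred_sym B <= k /\ length (atom_args B) <= k /\ incl (atom_args B) (atom_subterms A).

(* Under guarded rules a ground atom depends only on atoms over its own finitely
   many subterms. *)
Definition guarded_rule (k : nat) (r : rule) : Prop :=
  forall l, In l (body r) -> atom_below k (head r) (lit_atom l).

Lemma atom_below_trans k A B C : atom_below k A B -> atom_below k B C -> atom_below k A C.
Proof.
  intros [_ [_ HAB]] [HC1 [HC2 HBC]]. split; [exact HC1|]. split; [exact HC2|].
  intros t Ht. apply HBC in Ht. apply in_flat_map in Ht as [u [Hu Ht]].
  apply HAB in Hu. apply in_flat_map in Hu as [w [Hw Hu]].
  apply in_flat_map. exists w. split; [exact Hw|]. eapply subterms_trans; eauto.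
Qed.

Lemma atom_below_subst k s A B :
  atom_below k A B -> atom_below k (subst_atom s A) (subst_atom s B).
Proof.
  intros [H1 [H2 H3]]. split; [exact H1|]. split; [simpl; rewrite length_map; exact H2|].
  intros t Ht. apply in_map_iff in Ht as [t0 [<- Ht0]].
  apply H3 in Ht0. apply in_flat_map in Ht0 as [u [Hu Ht0]].
  apply in_flat_map. exists (subst s u). split; [apply in_map; exact Hu|].
  apply subterms_subst. exact Ht0.
Qed.

Section Guarded.

Variables (P : program) (k : nat).
Hypothesis P_guarded : forall r, In r P -> guarded_rule k r.

Lemma dep_edge_below A B : dep_edge P A B -> atom_below k A B.
Proof.
  intros [r [[r0 [s [Hin [_ ->]]]] [<- Hb]]].
  assert (Hl : exists l, In l (body r0) /\ B = subst_atom s (lit_atom l)).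
  { destruct Hb as [Hb|Hb]; apply in_map_iff in Hb as [l [Hl1 Hl2]];
      exists l; split; auto; destruct l; inversion Hl1; reflexivity. }
  destruct Hl as [l [Hl ->]]. apply atom_below_subst, P_guarded; assumption.
Qed.

Lemma depends_below A B : depends P A B -> A = B \/ atom_below k A B.
Proof.
  intros HAB. apply clos_rt_rtn1 in HAB.
  induction HAB as [|B C HBC _ [<-|HAB]]; [now left| |]; right.
  - now apply dep_edge_below.
  - eapply atom_below_trans; [exact HAB | now apply dep_edge_below].
Qed.

End Guarded.

Fixpoint tuples (m : nat) (L : list term) : list (list term) :=
  match m with 0 => [[]] | S m => flat_map (fun x => map (cons x) (tuples m L)) L end.

Lemma in_tuples L l : incl l L -> In l (tuples (length l) L).
Proof.
  induction l as [|x l IHl]; intros H; simpl; [now left|].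
  apply in_flat_map. exists x. split; [apply H; now left|].
  apply in_map, IHl. intros y Hy. apply H. now right.
Qed.

Definition atoms_below (k : nat) (A : atom) : list atom :=
  flat_map (fun p => flat_map (fun m => map (mkAtom p) (tuples m (atom_subterms A)))
                              (seq 0 (S k)))
           (seq 0 (S k)).

Lemma in_atoms_below k A B : atom_below k A B -> In B (atoms_below k A).
Proof.
  destruct B as [p args]. intros [H1 [H2 H3]]. unfold atoms_below.
  apply in_flat_map. exists p. split; [apply in_seq; simpl in *; lia|].
  apply in_flat_map. exists (length args). split; [apply in_seq; simpl in *; lia|].
  apply in_map, in_tuples, H3.
Qed.

Lemma finitely_recursive_guarded P k :
  (forall r, In r P -> guarded_rule k r) -> finitely_recursive P.
Proof.
  intros HP A _. exists (A :: atoms_below k A). intros B HAB.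
  destruct (depends_below P k HP A B HAB) as [<-|Hbelow]; [now left|].
  right. now apply in_atoms_below.
Qed.

Definition derivable (P : program) (a : atom) : Prop :=
  forall M, least_model_reduct P M a.

Definition horn_least_model (P : program) : atom -> Prop :=
  least_model_reduct P (fun _ => True).

Lemma closed_reduct_horn P M S : closed_reduct P M S -> closed_reduct P (fun _ => True) S.
Proof.
  intros HS r Hr Hneg. apply HS; [exact Hr|]. intros a Ha _. exact (Hneg a Ha I).
Qed.

Lemma stable_horn_least_model P :
  (forall r, ground_rule P r -> (forall b, In (Pos b) (body r) -> horn_least_model P b) ->
     forall a, ~ In (Neg a) (body r)) ->
  stable_model P (horn_least_model P).
Proof.
  intros Hblocked a. split.
  - intros Ha S HS. exact (Ha S (closed_reduct_horn P _ S HS)).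
  - intros Ha. apply Ha. intros r Hr _ Hpos S HS. apply HS; [exact Hr| |].
    + intros b Hb. exfalso. exact (Hblocked r Hr Hpos b Hb).
    + intros b Hb. exact (Hpos b Hb S HS).
Qed.

Lemma stable_model_self_blocked P M a :
  stable_model P M -> (forall r, ground_rule P r -> head r = a -> In (Neg a) (body r)) -> ~ M a.
Proof.
  intros HM Hblock HMa.
  apply (proj1 (HM a) HMa (fun x => x <> a)); [|reflexivity].
  intros r Hr Hneg _ Heq. exact (Hneg a (Hblock r Hr Heq) HMa).
Qed.

Lemma inconsistent_self_blocking P r :
  ground_rule P r ->
  (forall b, In (Neg b) (body r) -> b = head r) ->
  (forall b, In (Pos b) (body r) -> derivable P b) ->
  (forall r', ground_rule P r' -> head r' = head r -> In (Neg (head r)) (body r')) ->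
  inconsistent P.
Proof.
  intros Hr Hneg Hpos Hblock [M HM].
  assert (Hout : ~ M (head r)) by exact (stable_model_self_blocked P M _ HM Hblock).
  apply Hout, HM. intros S HS. apply HS; [exact Hr| |].
  - intros b Hb. rewrite (Hneg b Hb). exact Hout.
  - intros b Hb. exact (Hpos b Hb M S HS).
Qed.

Notation tZ := (Fn 0 []).
Notation tS x := (Fn 1 [x]).
Notation tN := (Fn 2 []).
Notation tC x y := (Fn 3 [x; y]).
Notation tD g v y d := (Fn 4 [g; v; y; d]).
Notation "# n" := (Var n) (at level 0, n at level 0).

Fixpoint tnum (n : nat) : term := match n with 0 => tZ | S k => tS (tnum k) end.

Definition tlist (l : list term) : term := fold_right (fun x r => tC x r) tN l.

Definition tnums (v : list nat) : term := tlist (map tnum v).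

Fixpoint tcode (g : recf) : term :=
  match g with
  | RZero => Fn 5 []
  | RSucc => Fn 6 []
  | RProj i => Fn 7 [tnum i]
  | RComp f gs => Fn 8 [tcode f; tlist (map tcode gs)]
  | RPrec f g => Fn 9 [tcode f; tcode g]
  | RMu f => Fn 10 [tcode f]
  end.

Notation tcodes gs := (tlist (map tcode gs)).

Fixpoint num_of (t : term) : nat := match t with tS x => S (num_of x) | _ => 0 end.

Fixpoint nums_of (t : term) : list nat :=
  match t with tC x r => num_of x :: nums_of r | _ => [] end.

Fixpoint code_of (t : term) : recf :=
  match t with
  | Fn 6 [] => RSucc
  | Fn 7 [i] => RProj (num_of i)
  | Fn 8 [f; gs] => RComp (code_of f) (codes_of gs)
  | Fn 9 [f; g] => RPrec (code_of f) (code_of g)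
  | Fn 10 [f] => RMu (code_of f)
  | _ => RZero
  end
with codes_of (t : term) : list recf :=
  match t with tC g r => code_of g :: codes_of r | _ => [] end.

Fixpoint recf_nested_ind (P : recf -> Prop) (H0 : P RZero) (H1 : P RSucc)
  (H2 : forall i, P (RProj i))
  (H3 : forall f gs, P f -> (forall g, In g gs -> P g) -> P (RComp f gs))
  (H4 : forall f g, P f -> P g -> P (RPrec f g)) (H5 : forall f, P f -> P (RMu f))
  (r : recf) : P r :=
  let F := recf_nested_ind P H0 H1 H2 H3 H4 H5 in
  match r with
  | RZero => H0
  | RSucc => H1
  | RProj i => H2 i
  | RComp f gs => H3 f gs (F f) ((fix go (gs : list recf) : forall g, In g gs -> P g :=
      match gs with
      | [] => fun g H => False_ind _ H
      | u :: us => fun g H => match H with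
                    | or_introl e => eq_ind u P (F u) g e
                    | or_intror H' => go us g H'
                    end
      end) gs)
  | RPrec f g => H4 f g (F f) (F g)
  | RMu f => H5 f (F f)
  end.

Lemma num_of_tnum n : num_of (tnum n) = n.
Proof. induction n; simpl; congruence. Qed.

Lemma nums_of_tnums v : nums_of (tnums v) = v.
Proof.
  unfold tnums. induction v as [|x v IHv]; simpl; [reflexivity|].
  now rewrite num_of_tnum, IHv.
Qed.

Lemma code_of_tcode g : code_of (tcode g) = g.
Proof.
  induction g as [| |i|f gs IHf IHgs| |] using recf_nested_ind; simpl; try congruence.
  - now rewrite num_of_tnum.
  - rewrite IHf. f_equal. induction gs as [|h gs IH]; simpl; [reflexivity|].
    rewrite (IHgs h (or_introl eq_refl)), IH; [reflexivity|].
    intros g Hg. exact (IHgs g (or_intror Hg)).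
Qed.

Lemma subst_tnum s n : subst s (tnum n) = tnum n.
Proof. induction n; simpl; congruence. Qed.

Lemma subst_tnums s v : subst s (tnums v) = tnums v.
Proof.
  unfold tnums. induction v as [|x v IHv]; simpl; [reflexivity|].
  now rewrite subst_tnum, IHv.
Qed.

Lemma subst_tcode s g : subst s (tcode g) = tcode g.
Proof.
  induction g as [| |i|f gs IHf IHgs| |] using recf_nested_ind; simpl; try congruence.
  - now rewrite subst_tnum.
  - rewrite IHf. do 3 f_equal. induction gs as [|h gs IH]; simpl; [reflexivity|].
    rewrite (IHgs h (or_introl eq_refl)).
    specialize (IH (fun g Hg => IHgs g (or_intror Hg))). simpl in IH. congruence.
Qed.

(* Predicates of the interpreter, over ground terms:
   - [ev_at G V Y D]: D is a derivation of [eval G V Y];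
   - [evs_at DS GS V YS]: the functions of GS map V to YS, with derivations DS;
   - [pos_below_at DS F V N]: F is positive on every [m :: V] with [m < N];
   - [nth_at I V Y]: [nth I V 0 = Y].
   Carrying the derivations in the heads is what makes every rule guarded. *)
Notation ev_at G V Y D := (mkAtom 1 [tD G V Y D]).
Notation evs_at DS GS V YS := (mkAtom 2 [DS; GS; V; YS]).
Notation pos_below_at DS F V N := (mkAtom 3 [DS; F; V; N]).
Notation nth_at I V Y := (mkAtom 4 [I; V; Y]).

(* A fact whose only role is to put every function symbol of the encoding into
   the language, so that all encoded terms belong to the Herbrand universe. *)
Definition r_signature : rule :=
  mkRule (mkAtom 5 [tZ; tS #0; tN; tC #0 #0; tD #0 #0 #0 #0;
                    Fn 5 []; Fn 6 []; Fn 7 [#0]; Fn 8 [#0; #0]; Fn 9 [#0; #0]; Fn 10 [#0]]) [].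

Definition r_zero : rule := mkRule (ev_at (Fn 5 []) #0 tZ tN) [].
Definition r_succ_nil : rule := mkRule (ev_at (Fn 6 []) tN (tS tZ) tN) [].
Definition r_succ_cons : rule := mkRule (ev_at (Fn 6 []) (tC #0 #1) (tS #0) tN) [].
Definition r_proj : rule :=
  mkRule (ev_at (Fn 7 [#2]) #0 #1 tN) [Pos (nth_at #2 #0 #1)].
Definition r_comp : rule :=
  mkRule (ev_at (Fn 8 [#0; #1]) #2 #3 (tC (tD #0 #4 #3 #5) #6))
    [Pos (ev_at #0 #4 #3 #5); Pos (evs_at #6 #1 #2 #4)].
Definition r_prec_zero : rule :=
  mkRule (ev_at (Fn 9 [#0; #1]) (tC tZ #2) #3 (tC (tD #0 #2 #3 #4) tN))
    [Pos (ev_at #0 #2 #3 #4)].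
Definition r_prec_succ : rule :=
  mkRule (ev_at (Fn 9 [#0; #1]) (tC (tS #2) #3) #4
            (tC (tD (Fn 9 [#0; #1]) (tC #2 #3) #5 #6) (tC (tD #1 (tC #2 (tC #5 #3)) #4 #7) tN)))
    [Pos (ev_at (Fn 9 [#0; #1]) (tC #2 #3) #5 #6); Pos (ev_at #1 (tC #2 (tC #5 #3)) #4 #7)].
Definition r_mu : rule :=
  mkRule (ev_at (Fn 10 [#0]) #1 #2 (tC (tD #0 (tC #2 #1) tZ #3) #4))
    [Pos (ev_at #0 (tC #2 #1) tZ #3); Pos (pos_below_at #4 #0 #1 #2)].
Definition r_evs_nil : rule := mkRule (evs_at tN tN #0 tN) [].
Definition r_evs_cons : rule :=
  mkRule (evs_at (tC (tD #0 #1 #2 #3) #4) (tC #0 #5) #1 (tC #2 #6))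
    [Pos (ev_at #0 #1 #2 #3); Pos (evs_at #4 #5 #1 #6)].
Definition r_below_zero : rule := mkRule (pos_below_at tN #0 #1 tZ) [].
Definition r_below_succ : rule :=
  mkRule (pos_below_at (tC (tD #0 (tC #2 #1) (tS #3) #4) #5) #0 #1 (tS #2))
    [Pos (ev_at #0 (tC #2 #1) (tS #3) #4); Pos (pos_below_at #5 #0 #1 #2)].
Definition r_nth_zero_nil : rule := mkRule (nth_at tZ tN tZ) [].
Definition r_nth_zero_cons : rule := mkRule (nth_at tZ (tC #0 #1) #0) [].
Definition r_nth_succ_nil : rule := mkRule (nth_at (tS #0) tN tZ) [].
Definition r_nth_succ_cons : rule :=
  mkRule (nth_at (tS #0) (tC #1 #2) #3) [Pos (nth_at #0 #2 #3)].

Definition interp : program :=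
  [r_signature; r_zero; r_succ_nil; r_succ_cons; r_proj; r_comp; r_prec_zero; r_prec_succ;
   r_mu; r_evs_nil; r_evs_cons; r_below_zero; r_below_succ;
   r_nth_zero_nil; r_nth_zero_cons; r_nth_succ_nil; r_nth_succ_cons].

Definition halt_pattern (g : recf) (n : nat) : term := tD (tcode g) (tnums [n]) #0 #1.

Definition r_halt (g : recf) (n : nat) : rule :=
  mkRule (mkAtom 0 [halt_pattern g n])
    [Neg (mkAtom 0 [halt_pattern g n]); Pos (mkAtom 1 [halt_pattern g n])].

Definition reduction_program (g : recf) (n : nat) : program := r_halt g n :: interp.

Lemma interp_guarded r : In r interp -> guarded_rule 4 r.
Proof.
  intros Hr. repeat destruct Hr as [<-|Hr]; try contradiction;
  intros l Hl; repeat destruct Hl as [<-|Hl]; try contradiction;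
  (split; [simpl; lia | split; [simpl; lia |]]);
  intros t Ht; repeat destruct Ht as [<-|Ht]; try contradiction;
  simpl; repeat (first [left; reflexivity | right]).
Qed.

Lemma r_halt_guarded g n : guarded_rule 4 (r_halt g n).
Proof.
  intros l Hl; repeat destruct Hl as [<-|Hl]; try contradiction;
  (split; [simpl; lia | split; [simpl; lia |]]);
  intros t Ht; repeat destruct Ht as [<-|Ht]; try contradiction;
  simpl; left; reflexivity.
Qed.

Lemma finitely_recursive_reduction_program g n : finitely_recursive (reduction_program g n).
Proof.
  apply (finitely_recursive_guarded _ 4). intros r [<-|Hr].
  - apply r_halt_guarded.
  - now apply interp_guarded.
Qed.

Definition tnum_code_step : pexpr :=
  PPair (PConst 1) (PPair (PConst 1) (PSucc (PPair PVar (PConst 0)))).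

Definition halt_program_code (g : recf) (rules : nat) : pexpr :=
  let singleton :=
    PPair (PConst 1) (PPair (PConst 3) (PSucc (PPair PVar (PConst (enc_list [enc_term tN]))))) in
  let pattern :=
    PPair (PConst 1) (PPair (PConst 4) (PSucc (PPair (PConst (enc_term (tcode g)))
      (PSucc (PPair singleton (PConst (enc_list (map enc_term [#0; #1])))))))) in
  let p0 := PPair (PConst 0) (PSucc (PPair pattern (PConst 0))) in
  let p1 := PPair (PConst 1) (PSucc (PPair pattern (PConst 0))) in
  PSucc (PPair (PPair p0 (PSucc (PPair (PPair (PConst 1) p0)
                                       (PSucc (PPair (PPair (PConst 0) p1) (PConst 0))))))
               (PConst rules)).

Lemma enc_halt_program g n rules :
  enc_program (r_halt g n :: rules) =
  pexpr_val (halt_program_code g (enc_list (map enc_rule rules))) (enc_term (tnum n)).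
Proof. reflexivity. Qed.

Lemma computable_reduction_program g : computable (fun n => enc_program (reduction_program g n)).
Proof.
  exists (pexpr_recf (halt_program_code g (enc_list (map enc_rule interp)))
            (RPrec (rconst (enc_term (tnum 0))) (pexpr_recf tnum_code_step (RProj 1)))).
  intros n. unfold reduction_program. rewrite enc_halt_program. apply eval_pexpr_recf.
  apply (eval_iterate tnum_code_step (fun n => enc_term (tnum n))). reflexivity.
Qed.

Definition intended (a : atom) : Prop :=
  match pred_sym a, atom_args a with
  | 1, [Fn 4 [G; V; Y; _]] => eval (code_of G) (nums_of V) (num_of Y)
  | 2, [_; GS; V; YS] => Forall2 (fun g y => eval g (nums_of V) y) (codes_of GS) (nums_of YS)
  | 3, [_; F; V; N] =>
      forall m, m < num_of N -> exists k, eval (code_of F) (m :: nums_of V) (S k)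
  | 4, [K; V; Y] => nth (num_of K) (nums_of V) 0 = num_of Y
  | 5, _ => True
  | _, _ => False
  end.

Lemma intended_closed g n : closed_reduct (reduction_program g n) (fun _ => True) intended.
Proof.
  intros r [r0 [s [Hin [_ ->]]]] Hneg Hpos.
  destruct Hin as [<-|Hin].
  { exfalso. exact (Hneg _ (or_introl eq_refl) I). }
  repeat destruct Hin as [<-|Hin]; try contradiction; unfold intended; simpl in Hpos |- *.
  - exact I.
  - constructor.
  - exact (ev_succ []).
  - exact (ev_succ (num_of (s 0) :: nums_of (s 1))).
  - rewrite <- (Hpos _ (or_introl eq_refl)). constructor.
  - econstructor;
      [exact (Hpos _ (or_intror (or_introl eq_refl))) | exact (Hpos _ (or_introl eq_refl))].
  - constructor. exact (Hpos _ (or_introl eq_refl)).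
  - econstructor;
      [exact (Hpos _ (or_introl eq_refl)) | exact (Hpos _ (or_intror (or_introl eq_refl)))].
  - constructor;
      [exact (Hpos _ (or_introl eq_refl)) | exact (Hpos _ (or_intror (or_introl eq_refl)))].
  - constructor.
  - constructor;
      [exact (Hpos _ (or_introl eq_refl)) | exact (Hpos _ (or_intror (or_introl eq_refl)))].
  - intros m Hm. lia.
  - intros m Hm. destruct (Nat.eq_dec m (num_of (s 2))) as [->|Hne].
    + eexists. exact (Hpos _ (or_introl eq_refl)).
    + apply (Hpos _ (or_intror (or_introl eq_refl))). simpl. lia.
  - reflexivity.
  - reflexivity.
  - reflexivity.
  - exact (Hpos _ (or_introl eq_refl)).
Qed.

Definition eval_nested_ind (Q : recf -> list nat -> nat -> Prop)
  (Hz : forall v, Q RZero v 0)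
  (Hs : forall v, Q RSucc v (S (nth 0 v 0)))
  (Hp : forall i v, Q (RProj i) v (nth i v 0))
  (Hc : forall f gs v ys z,
      Forall2 (fun g y => Q g v y) gs ys -> Q f ys z -> Q (RComp f gs) v z)
  (Hp0 : forall f g v z, Q f v z -> Q (RPrec f g) (0 :: v) z)
  (HpS : forall f g n v y z,
      Q (RPrec f g) (n :: v) y -> Q g (n :: y :: v) z -> Q (RPrec f g) (S n :: v) z)
  (Hm : forall f v n,
      Q f (n :: v) 0 -> (forall m, m < n -> exists k, Q f (m :: v) (S k)) -> Q (RMu f) v n) :
  forall g v y, eval g v y -> Q g v y :=
  fix go g v y (H : eval g v y) {struct H} : Q g v y :=
  match H in eval g v y return Q g v y with
  | ev_zero v => Hz v
  | ev_succ v => Hs v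
  | ev_proj i v => Hp i v
  | ev_comp f gs v ys z HF Hf =>
      Hc f gs v ys z
        ((fix go_list gs ys (HF : Forall2 (fun g y => eval g v y) gs ys)
            : Forall2 (fun g y => Q g v y) gs ys :=
          match HF in Forall2 _ gs ys return Forall2 (fun g y => Q g v y) gs ys with
          | Forall2_nil _ => Forall2_nil _
          | @Forall2_cons _ _ _ g y gs' ys' h hs =>
              Forall2_cons g y (go g v y h) (go_list gs' ys' hs)
          end) gs ys HF)
        (go f ys z Hf)
  | ev_prec0 f g v z Hf => Hp0 f g v z (go f v z Hf)
  | ev_precS f g n v y z H1 H2 => HpS f g n v y z (go _ _ _ H1) (go _ _ _ H2)
  | ev_mu f v n H0 H1 =>
      Hm f v n (go _ _ _ H0)
        (fun m Hlt => match H1 m Hlt with ex_intro _ k Hk => ex_intro _ k (go _ _ _ Hk) end)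
  end.

Definition signature : list (nat * nat) :=
  [(0, 0); (1, 1); (2, 0); (3, 2); (4, 4); (5, 0); (6, 0); (7, 1); (8, 2); (9, 2); (10, 1)].

Definition assign (l : list term) : nat -> term := fun x => nth x l tZ.

Section Completeness.

Variable P : program.
Hypothesis interp_incl : incl interp P.

Lemma hsym_signature f k : In (f, k) signature -> hsym P f k.
Proof.
  intros H. left. exists r_signature, (head r_signature).
  repeat destruct H as [H|H]; try contradiction; injection H as <- <-;
  [exists tZ | exists (tS #0) | exists tN | exists (tC #0 #0) | exists (tD #0 #0 #0 #0)
  | exists (Fn 5 []) | exists (Fn 6 []) | exists (Fn 7 [#0]) | exists (Fn 8 [#0; #0])
  | exists (Fn 9 [#0; #0]) | exists (Fn 10 [#0])];
  (split; [apply interp_incl; left; reflexivity |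
   split; [left; reflexivity |
   split; [simpl; repeat (first [left; reflexivity | right]) | apply occ_root; reflexivity]]]).
Qed.

Lemma herbrand_Fn f ts :
  In (f, length ts) signature -> (forall t, In t ts -> herbrand P t) -> herbrand P (Fn f ts).
Proof. intros Hf Hts. constructor; [now apply hsym_signature | exact Hts]. Qed.

Ltac herbrand_Fn_auto :=
  apply herbrand_Fn; [simpl; repeat (first [left; reflexivity | right]) |
    let t := fresh "t" in let Ht := fresh "Ht" in
    intros t Ht; repeat destruct Ht as [<-|Ht]; try contradiction].

Lemma herbrand_tnum m : herbrand P (tnum m).
Proof. induction m; simpl; repeat (assumption || herbrand_Fn_auto). Qed.

Lemma herbrand_tlist l : (forall t, In t l -> herbrand P t) -> herbrand P (tlist l).
Proof.
  induction l as [|x l IHl]; intros H; simpl; herbrand_Fn_auto.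
  - apply H. now left.
  - apply IHl. intros t Ht. apply H. now right.
Qed.

Lemma herbrand_tnums v : herbrand P (tnums v).
Proof.
  apply herbrand_tlist. intros t Ht. apply in_map_iff in Ht as [m [<- _]]. apply herbrand_tnum.
Qed.

Lemma herbrand_tcode h : herbrand P (tcode h).
Proof.
  induction h as [| |i|f gs IHf IHgs| |] using recf_nested_ind; simpl;
    repeat (assumption || apply herbrand_tnum || herbrand_Fn_auto).
  apply herbrand_tlist. intros t Ht. apply in_map_iff in Ht as [u [<- Hu]]. auto.
Qed.

Lemma herbrand_tcodes gs : herbrand P (tcodes gs).
Proof.
  apply herbrand_tlist. intros t Ht. apply in_map_iff in Ht as [u [<- _]]. apply herbrand_tcode.
Qed.

Lemma herbrand_assign l : (forall t, In t l -> herbrand P t) -> forall x, herbrand P (assign l x).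
Proof.
  intros H x. unfold assign. destruct (Nat.lt_ge_cases x (length l)).
  - apply H, nth_In. assumption.
  - rewrite nth_overflow by assumption. herbrand_Fn_auto.
Qed.

Lemma derive_by_rule r s a :
  In r P -> (forall x, herbrand P (s x)) -> (forall b, ~ In (Neg b) (body r)) ->
  (forall b, In (Pos b) (body r) -> derivable P (subst_atom s b)) ->
  a = subst_atom s (head r) -> derivable P a.
Proof.
  intros Hin Hs Hneg Hpos -> M S HS. apply (HS (subst_rule s r)).
  - exists r, s. auto.
  - intros b Hb. exfalso. apply in_map_iff in Hb as [[c|c] [Hc Hl]]; inversion Hc; subst.
    exact (Hneg c Hl).
  - intros b Hb. apply in_map_iff in Hb as [[c|c] [Hc Hl]]; inversion Hc; subst.
    exact (Hpos c Hl M S HS).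
Qed.

Ltac herbrand_auto :=
  repeat (first [ assumption | apply herbrand_tnum | apply herbrand_tnums
                | apply herbrand_tcode | apply herbrand_tcodes | herbrand_Fn_auto ]).

Ltac derive_by r l :=
  eapply (derive_by_rule r (assign l));
  [ apply interp_incl; simpl; repeat (first [left; reflexivity | right])
  | apply herbrand_assign; intros ? Ht; repeat destruct Ht as [<-|Ht]; try contradiction;
    herbrand_auto
  | let b := fresh "b" in let Hb := fresh "Hb" in
    intros b Hb; repeat destruct Hb as [Hb|Hb]; try discriminate; contradiction
  | let b := fresh "b" in let Hb := fresh "Hb" in
    intros b Hb; repeat destruct Hb as [Hb|Hb]; try contradiction; injection Hb as <-
  | reflexivity ].

Definition has_derivation (g : recf) (v : list nat) (y : nat) : Prop :=
  exists D, herbrand P D /\ derivable P (ev_at (tcode g) (tnums v) (tnum y) D).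

Lemma derivable_nth i v : derivable P (nth_at (tnum i) (tnums v) (tnum (nth i v 0))).
Proof.
  revert v. induction i as [|i IHi]; intros [|a v].
  - derive_by r_nth_zero_nil (@nil term).
  - derive_by r_nth_zero_cons [tnum a; tnums v].
  - derive_by r_nth_succ_nil [tnum i].
  - derive_by r_nth_succ_cons [tnum i; tnum a; tnums v; tnum (nth i v 0)]. apply IHi.
Qed.

Lemma derivable_evs v gs ys :
  Forall2 (fun g y => has_derivation g v y) gs ys ->
  exists DS, herbrand P DS /\ derivable P (evs_at DS (tcodes gs) (tnums v) (tnums ys)).
Proof.
  induction 1 as [|g y gs ys [D [HD1 HD2]] _ [DS [HS1 HS2]]].
  - exists tN. split; [herbrand_auto|]. derive_by r_evs_nil [tnums v].
  - exists (tC (tD (tcode g) (tnums v) (tnum y) D) DS). split; [herbrand_auto|].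
    derive_by r_evs_cons [tcode g; tnums v; tnum y; D; DS; tcodes gs; tnums ys];
      assumption.
Qed.

Lemma derivable_pos_below f v n :
  (forall m, m < n -> exists k, has_derivation f (m :: v) (S k)) ->
  exists DS, herbrand P DS /\ derivable P (pos_below_at DS (tcode f) (tnums v) (tnum n)).
Proof.
  induction n as [|n IHn]; intros H.
  - exists tN. split; [herbrand_auto|]. derive_by r_below_zero [tcode f; tnums v].
  - destruct (H n (Nat.lt_succ_diag_r n)) as [k [D [HD1 HD2]]].
    destruct IHn as [DS [HS1 HS2]]; [intros m Hm; apply H; lia|].
    exists (tC (tD (tcode f) (tnums (n :: v)) (tnum (S k)) D) DS). split; [herbrand_auto|].
    derive_by r_below_succ [tcode f; tnums v; tnum n; tnum k; D; DS]; assumption.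
Qed.

Lemma eval_has_derivation g v y : eval g v y -> has_derivation g v y.
Proof.
  revert g v y. apply eval_nested_ind.
  - intros v. exists tN. split; [herbrand_auto|]. derive_by r_zero [tnums v].
  - intros [|a v]; exists tN; (split; [herbrand_auto|]).
    + derive_by r_succ_nil (@nil term).
    + derive_by r_succ_cons [tnum a; tnums v].
  - intros i v. exists tN. split; [herbrand_auto|].
    derive_by r_proj [tnums v; tnum (nth i v 0); tnum i]. apply derivable_nth.
  - intros f gs v ys z Hgs [DF [HF1 HF2]].
    destruct (derivable_evs v gs ys Hgs) as [DS [HS1 HS2]].
    exists (tC (tD (tcode f) (tnums ys) (tnum z) DF) DS). split; [herbrand_auto|].
    derive_by r_comp [tcode f; tcodes gs; tnums v; tnum z; tnums ys; DF; DS]; assumption.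
  - intros f g v z [DF [HF1 HF2]].
    exists (tC (tD (tcode f) (tnums v) (tnum z) DF) tN). split; [herbrand_auto|].
    derive_by r_prec_zero [tcode f; tcode g; tnums v; tnum z; DF]. assumption.
  - intros f g n v y z [D1 [H11 H12]] [D2 [H21 H22]].
    exists (tC (tD (tcode (RPrec f g)) (tnums (n :: v)) (tnum y) D1)
               (tC (tD (tcode g) (tnums (n :: y :: v)) (tnum z) D2) tN)).
    split; [herbrand_auto|].
    derive_by r_prec_succ [tcode f; tcode g; tnum n; tnums v; tnum z; tnum y; D1; D2];
      assumption.
  - intros f v n [D0 [H01 H02]] Hlt.
    destruct (derivable_pos_below f v n Hlt) as [DS [HS1 HS2]].
    exists (tC (tD (tcode f) (tnums (n :: v)) (tnum 0) D0) DS). split; [herbrand_auto|].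
    derive_by r_mu [tcode f; tnums v; tnum n; D0; DS]; assumption.
Qed.

End Completeness.

Lemma subst_halt_pattern s g n k :
  subst_atom s (mkAtom k [halt_pattern g n]) = mkAtom k [tD (tcode g) (tnums [n]) (s 0) (s 1)].
Proof.
  change (mkAtom k [Fn 4 [subst s (tcode g); subst s (tnums [n]); s 0; s 1]] =
          mkAtom k [tD (tcode g) (tnums [n]) (s 0) (s 1)]).
  now rewrite subst_tcode, subst_tnums.
Qed.

Lemma interp_head_pred r : In r interp -> pred_sym (head r) <> 0.
Proof. intros Hr. repeat destruct Hr as [<-|Hr]; try contradiction; discriminate. Qed.

Lemma interp_negation_free r b : In r interp -> ~ In (Neg b) (body r).
Proof.
  intros Hr. repeat destruct Hr as [<-|Hr]; try contradiction; simpl;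
  intros Hb; repeat destruct Hb as [Hb|Hb]; try discriminate; contradiction.
Qed.

Lemma interp_incl_reduction_program g n : incl interp (reduction_program g n).
Proof. apply incl_tl, incl_refl. Qed.

Lemma halts_inconsistent g n : (exists y, eval g [n] y) -> inconsistent (reduction_program g n).
Proof.
  intros [y Hy].
  destruct (eval_has_derivation _ (interp_incl_reduction_program g n) g [n] y Hy) as [D [HD Hder]].
  set (s := assign [tnum y; D]).
  apply (inconsistent_self_blocking _ (subst_rule s (r_halt g n))).
  - exists (r_halt g n), s. split; [now left|]. split; [|reflexivity].
    apply herbrand_assign; [apply interp_incl_reduction_program|].
    intros t [<-|[<-|[]]]; [apply herbrand_tnum, interp_incl_reduction_program | exact HD].
  - intros b [Hb|[Hb|[]]]; [now injection Hb as <- | discriminate].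
  - intros b [Hb|[Hb|[]]]; [discriminate|]. injection Hb as <-.
    rewrite subst_halt_pattern. exact Hder.
  - intros r' [r0 [s' [Hin [_ ->]]]] Hhead. destruct Hin as [<-|Hin].
    + rewrite <- Hhead. now left.
    + exfalso. apply (interp_head_pred r0 Hin).
      exact (f_equal pred_sym Hhead).
Qed.

(* Without a convergent computation the only rule with a negative literal never
   fires, so the least model of the negation-free rules is stable. *)
Lemma inconsistent_halts g n : inconsistent (reduction_program g n) -> exists y, eval g [n] y.
Proof.
  intros Hinc. apply NNPP. intros Hdiv. apply Hinc.
  exists (horn_least_model (reduction_program g n)).
  apply stable_horn_least_model. intros r [r0 [s [Hin [_ ->]]]] Hpos b Hb.
  destruct Hin as [<-|Hin].
  - apply Hdiv.
    assert (Hsem := Hpos _ (or_intror (or_introl eq_refl)) intended (intended_closed g n)).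
    rewrite subst_halt_pattern in Hsem.
    change (eval (code_of (tcode g)) (nums_of (tnums [n])) (num_of (s 0))) in Hsem.
    rewrite code_of_tcode, nums_of_tnums in Hsem. eauto.
  - apply in_map_iff in Hb as [[c|c] [Hc Hl]]; inversion Hc; subst.
    exact (interp_negation_free r0 c Hin Hl).
Qed.

Theorem theorem5p4 : re_hard inconsistent_fr.
Proof.
  intros A [g Hg]. exists (reduction_program g).
  split; [apply computable_reduction_program|].
  intros n. rewrite Hg. split.
  - intros Hhalt. split.
    + apply finitely_recursive_reduction_program.
    + now apply halts_inconsistent.
  - intros [_ Hinc]. now apply inconsistent_halts.
Qed.
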